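(* Let $4\leq m\leq n$ be integers and suppose there exists a generalized quadrangle of order $(m,n)$. Let $m_1\leq n_1$ be integers with $3\le m_1\leq m$ and $n_1\leq n$. Then there exist $(m_1,n_1;8)$-bipartite biregular graphs of order $(m_1+n_1)mn$.
   Context: A generalized quadrangle is a finite point-line incidence geometry whose incidence (Levi) graph — the bipartite graph on points and lines with a point adjacent to a line iff incident — is connected, of diameter 4 and girth 8. It has order $(s,t)$ if each line has exactly $s+1$ points and each point lies on exactly $t+1$ lines. For integers $a,b\geq 2$ and even $g\ge4$, an $(a,b;g)$-bipartite biregular graph is a finite simple bipartite graph of girth exactly $g$ in which all vertices of one bipartition class have degree $a$ and all vertices of the other class have degree $b$. *)

From mathcomp Require Import all_boot.
Set Implicit Arguments. Unset Strict Implicit. Unset Printing Implicit Defensive.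

Definition simple_graph (T : finType) (e : rel T) : Prop :=
  symmetric e /\ irreflexive e.

Definition walk_len (T : finType) (e : rel T) (x y : T) (k : nat) : Prop :=
  exists s : seq T, [/\ size s = k, path e x s & last x s = y].

Definition dist_le (T : finType) (e : rel T) (x y : T) (k : nat) : Prop :=
  exists2 j, j <= k & walk_len e x y j.

Definition connected_graph (T : finType) (e : rel T) : Prop :=
  forall x y : T, exists k, walk_len e x y k.

Definition diameter_eq (T : finType) (e : rel T) (d : nat) : Prop :=
  (forall x y : T, dist_le e x y d) /\
  (exists x y : T, ~ dist_le e x y d.-1 /\ dist_le e x y d).

Definition has_cycle_len (T : finType) (e : rel T) (k : nat) : Prop :=
  exists s : seq T, [/\ 3 <= k, size s = k, uniq s & cycle e s].

Definition girth_eq (T : finType) (e : rel T) (g : nat) : Prop :=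
  has_cycle_len e g /\ (forall k, k < g -> ~ has_cycle_len e k).

Definition degree (T : finType) (e : rel T) (x : T) : nat := #|[set y | e x y]|.

Definition levi_rel (P L : finType) (I : P -> L -> bool) : rel (P + L) :=
  fun u v => match u, v with
             | inl p, inr l => I p l
             | inr l, inl p => I p l
             | _, _ => false
             end.

Definition is_GQ (P L : finType) (I : P -> L -> bool) : Prop :=
  let e := levi_rel I in
  [/\ connected_graph e, diameter_eq e 4 & girth_eq e 8].

Definition is_GQ_order (P L : finType) (I : P -> L -> bool) (s t : nat) : Prop :=
  [/\ is_GQ I,
      (forall l : L, #|[set p | I p l]| = s.+1) &
      (forall p : P, #|[set l | I p l]| = t.+1)].

Definition bipartite_biregular (T : finType) (e : rel T) (c : T -> bool)
    (a b g : nat) : Prop :=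
  [/\ [&& 2 <= a, 2 <= b, ~~ odd g & 4 <= g], simple_graph e,
      (forall x y, e x y -> c x != c y),
      (forall x, (c x -> degree e x = a) /\ (~~ c x -> degree e x = b)) &
      girth_eq e g].

From mathcomp Require Import all_boot zify.
Set Implicit Arguments. Unset Strict Implicit. Unset Printing Implicit Defensive.

(* Fix a flag (p, M0) of the quadrangle, a set Y of m1 points of M0 other than
   p and a set Z of n1 lines through p other than M0.  The shadow of Y is the
   set of points off M0 whose projection onto M0 lies in Y; dually, the shadow
   of Z is the set of lines not through p whose projection onto the pencil of
   p lies in Z.  A point of the shadow of Y is opposite p, so for each line of
   Z exactly one line through it meets that line: it has n1 neighbours in the
   shadow of Z; dually a line of the shadow of Z has m1 neighbours.  The two
   shadows have m1 * n * m and n1 * m * n elements.  The incidence graph they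
   induce has girth at least 8, and exactly 8 as soon as Y and Z contain the
   (at most three) projections of the points and lines of a suitable ordinary
   quadrangle; this is where m1 >= 3 is used. *)

Lemma card_uniform_fibres (A K : finType) (D : {set A}) (B : {set K})
    (R : A -> K -> bool) c :
  (forall x, x \in D -> exists2 k, k \in B & R x k) ->
  (forall x k k', x \in D -> k \in B -> k' \in B -> R x k -> R x k' -> k = k') ->
  (forall k, k \in B -> #|[set x in D | R x k]| = c) ->
  #|D| = #|B| * c.
Proof.
move=> exR uniqR cardR; rewrite -sum_nat_const.
rewrite (eq_bigr (fun k => \sum_(x in D) R x k)); last first.
  move=> k kB; rewrite -(cardR k kB) -sum1_card big_mkcond [RHS]big_mkcond /=.
  by apply: eq_bigr => x _; rewrite !inE; case: (x \in D); case: (R x k).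
rewrite -sum1_card exchange_big /=; apply: eq_bigr => x xD.
have [k kB Rxk] := exR x xD.
rewrite (bigD1 k) //= Rxk big1 // => k' /andP [k'B k'k].
by case Rxk': (R x k') => //; rewrite (uniqR x k' k) ?eqxx in k'k.
Qed.

Lemma exists_set_between (T : finType) (A B : {set T}) k :
  A \subset B -> #|A| <= k <= #|B| ->
  exists C : {set T}, [/\ A \subset C, C \subset B & #|C| = k].
Proof.
move=> AB /andP []; elim: k => [|k IHk].
  by rewrite leqn0 => /eqP/cards0_eq -> _; exists set0; rewrite !sub0set cards0.
rewrite leq_eqVlt => /orP [/eqP <- _|]; first by exists A.
rewrite ltnS => Ak kB; have [C [AC CB cC]] := IHk Ak (ltnW kB).
have /card_gt0P [z] : 0 < #|B :\: C| by rewrite cardsD (setIidPr CB) subn_gt0 cC.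
rewrite inE => /andP [zC zB]; exists (z |: C).
by rewrite (subset_trans AC (subsetUr _ _)) subUset sub1set zB CB cardsU1 zC cC.
Qed.

Lemma exists_fresh (T : finType) (A : {set T}) (s : seq T) :
  size s < #|A| -> exists2 x, x \in A & x \notin s.
Proof.
move=> sA; apply/exists_inP; rewrite -negb_forall_in.
apply: contraTN sA => /forall_inP As; rewrite -leqNgt.
by apply: leq_trans (card_size s); apply/subset_leq_card/subsetP => x /As.
Qed.

Section SumSet.
Variables P L : finType.

Definition sum_set (A : {set P}) (B : {set L}) : {set P + L} :=
  [set v | match v with inl x => x \in A | inr l => l \in B end].

Lemma sum_setS (A A' : {set P}) (B B' : {set L}) :
  A \subset A' -> B \subset B' -> sum_set A B \subset sum_set A' B'.
Proof.
move=> /subsetP AA' /subsetP BB'; apply/subsetP => -[x|l]; rewrite !inE.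
  exact: AA'.
exact: BB'.
Qed.

Lemma inl_sum_set (A : {set P}) (B : {set L}) x : (inl x \in sum_set A B) = (x \in A).
Proof. by rewrite inE. Qed.

Lemma inr_sum_set (A : {set P}) (B : {set L}) l : (inr l \in sum_set A B) = (l \in B).
Proof. by rewrite inE. Qed.

Lemma card_sum_set (A : {set P}) (B : {set L}) : #|sum_set A B| = #|A| + #|B|.
Proof.
by rewrite -!sum1_card big_sumType; congr (_ + _); apply: eq_bigl => ?; rewrite inE.
Qed.

Lemma card_sum_set_cond (A : {set P}) (B : {set L}) (Q : pred (P + L)) :
  #|[set v in sum_set A B | Q v]| =
  #|[set x in A | Q (inl x)]| + #|[set l in B | Q (inr l)]|.
Proof.
by rewrite -!sum1_card big_sumType; congr (_ + _); apply: eq_bigl => ?; rewrite !inE.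
Qed.

End SumSet.

Definition induced (T : finType) (e : rel T) (S : {set T}) : rel {x | x \in S} :=
  relpre val e.
Arguments induced [T] e S.

Section Induced.
Variables (T : finType) (e : rel T) (S : {set T}).

Lemma induced_simple : simple_graph e -> simple_graph (induced e S).
Proof.
by case=> esym eirr; split=> [u v|u]; rewrite /induced /=; [apply: esym|apply: eirr].
Qed.

Lemma card_induced : #|({x | x \in S} : finType)| = #|S|.
Proof. by rewrite card_sig. Qed.

Lemma degree_induced v : degree (induced e S) v = #|[set x in S | e (val v) x]|.
Proof.
rewrite /degree -(card_imset _ val_inj); apply: eq_card => x; rewrite !inE.
apply/imsetP/andP => [[u]|[xS exv]]; first by rewrite inE => euv ->; rewrite (valP u).
by exists (exist _ x xS); rewrite ?inE.
Qed.

Lemma girth_eq_induced g (c : seq T) :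
  (forall k, k < g -> ~ has_cycle_len e k) ->
  [/\ 3 <= g, size c = g, uniq c, cycle e c & all (mem S) c] ->
  girth_eq (induced e S) g.
Proof.
move=> short [g3 sz uc cc c_in_S]; split.
  pose cS : seq {x | x \in S} := pmap insub c.
  have Ec : map val cS = c.
    rewrite pmap_filter; last exact: insubK.
    by apply/all_filterP; rewrite (eq_all (isSome_insub _)).
  by exists cS; rewrite -(map_inj_uniq val_inj) -cycle_map -(size_map val) Ec.
move=> k kg [c' [k3 sz' uc' cc']]; apply: (short k kg); exists (map val c').
by rewrite size_map (map_inj_uniq val_inj) cycle_map.
Qed.

End Induced.

Definition gq_axioms (P L : finType) (I : P -> L -> bool) (s t : nat) : Prop :=
  [/\ forall l, #|[set x | I x l]| = s.+1,
      forall x, #|[set l | I x l]| = t.+1,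
      forall x x' l l', I x l -> I x' l -> I x l' -> I x' l' -> x = x' \/ l = l',
      forall x l, ~~ I x l -> exists y M, [/\ I x M, I y M & I y l] &
      forall x l y M y' M', ~~ I x l -> I x M -> I y M -> I y l ->
        I x M' -> I y' M' -> I y' l -> y = y'].

Definition dual (P L : finType) (I : P -> L -> bool) : L -> P -> bool :=
  fun l x => I x l.

Definition collinear (P L : finType) (I : P -> L -> bool) (x y : P) : bool :=
  [exists N, I x N && I y N].

Definition shadow (P L : finType) (I : P -> L -> bool) (M : L) (Y : {set P}) :=
  [set x | ~~ I x M & [exists y in Y, collinear I x y]].

Section Collinear.
Variables (P L : finType) (I : P -> L -> bool).

Lemma collinear_sym x y : collinear I x y = collinear I y x.
Proof. by apply/existsP/existsP => -[N]; rewrite andbC; exists N. Qed.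

Lemma collinearP x y N : I x N -> I y N -> collinear I x y.
Proof. by move=> xN yN; apply/existsP; exists N; rewrite xN. Qed.

Lemma shadowS M : {homo shadow I M : Y Y' / Y \subset Y'}.
Proof.
move=> Y Y' /subsetP YY'; apply/subsetP => x; rewrite !inE => /andP [-> /exists_inP [y yY xy]].
by apply/exists_inP; exists y => //; apply: YY'.
Qed.

Lemma in_shadow1 M f x : (x \in shadow I M [set f]) = ~~ I x M && collinear I x f.
Proof.
rewrite inE; congr andb; apply/exists_inP/idP => [[z /set1P -> //]|xf].
by exists f; rewrite ?inE.
Qed.

End Collinear.

Section Levi.
Variables (P L : finType) (I : P -> L -> bool).

Definition is_line (v : P + L) : bool := if v is inr _ then true else false.

Lemma levi_simple : simple_graph (levi_rel I).
Proof. by split=> [[x|l] [y|k]|[x|l]]. Qed.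

Lemma levi_bipartite u v : levi_rel I u v -> is_line u != is_line v.
Proof. by case: u v => [x|l] [y|k]. Qed.

Lemma card_levi_nbr_inl (A : {set P}) (B : {set L}) x :
  #|[set v in sum_set A B | levi_rel I (inl x) v]| = #|[set l in B | I x l]|.
Proof.
rewrite card_sum_set_cond /=; have -> : [set y in A | false] = set0.
  by apply/setP => y; rewrite !inE andbF.
by rewrite cards0.
Qed.

Lemma card_levi_nbr_inr (A : {set P}) (B : {set L}) l :
  #|[set v in sum_set A B | levi_rel I (inr l) v]| = #|[set x in A | I x l]|.
Proof.
rewrite card_sum_set_cond /=; have -> : [set k in B | false] = set0.
  by apply/setP => k; rewrite !inE andbF.
by rewrite cards0 addn0.
Qed.

Definition octagon (x1 x2 x3 x4 : P) (l1 l2 l3 l4 : L) : seq (P + L) :=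
  [:: inl x1; inr l1; inl x2; inr l2; inl x3; inr l3; inl x4; inr l4].

Lemma octagon_cycle x1 x2 x3 x4 l1 l2 l3 l4 :
  ~~ collinear I x1 x3 -> ~~ collinear (dual I) l1 l3 ->
  I x1 l1 -> I x2 l1 -> I x2 l2 -> I x3 l2 -> I x3 l3 -> I x4 l3 -> I x4 l4 -> I x1 l4 ->
  let c := octagon x1 x2 x3 x4 l1 l2 l3 l4 in uniq c && cycle (levi_rel I) c.
Proof.
move=> x13 l13 x1l1 x2l1 x2l2 x3l2 x3l3 x4l3 x4l4 x1l4.
have x31 : ~~ collinear I x3 x1 by rewrite collinear_sym.
have l31 : ~~ collinear (dual I) l3 l1 by rewrite collinear_sym.
have neq_x x y z l : I y l -> I z l -> ~~ collinear I x z -> x != y.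
  by move=> yl zl; apply: contraNneq => xy; subst y; apply: collinearP yl zl.
have neq_l l l' k x : I x l' -> I x k -> ~~ collinear (dual I) l k -> l != l'.
  move=> xl' xk; apply: contraNneq => ll'; subst l'.
  exact: (collinearP (I := dual I)) xl' xk.
rewrite /= !inE -!sum_eqE /= x1l1 x2l1 x2l2 x3l2 x3l3 x4l3 x4l4 x1l4 !andbT !negb_or.
rewrite (neq_x _ _ _ _ x2l2 x3l2 x13) (neq_x _ _ _ _ x3l3 x3l3 x13).
rewrite (neq_x _ _ _ _ x4l3 x3l3 x13) [x2 == x3]eq_sym (neq_x _ _ _ _ x2l1 x1l1 x31).
rewrite (neq_x _ _ _ _ x4l4 x1l4 x31) (neq_l _ _ _ _ x3l2 x3l3 l13).
rewrite (neq_l _ _ _ _ x3l3 x3l3 l13) (neq_l _ _ _ _ x4l4 x4l3 l13).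
rewrite [l2 == l3]eq_sym (neq_l _ _ _ _ x2l2 x2l1 l31) (neq_l _ _ _ _ x1l4 x1l1 l31).
have x24 : x2 != x4.
  by apply: contraNneq l13 => x24; subst x4; apply: (collinearP (I := dual I)) x2l1 x4l3.
have l24 : l2 != l4 by apply: contraNneq x31 => l24; subst l4; apply: collinearP x3l2 x1l4.
by rewrite x24 l24.
Qed.

Section Girth.
Hypothesis no_short_cycle : forall k, k < 8 -> ~ has_cycle_len (levi_rel I) k.

Lemma levi_unique_line x x' l l' :
  I x l -> I x' l -> I x l' -> I x' l' -> x = x' \/ l = l'.
Proof.
move=> xl x'l xl' x'l'.
case: (eqVneq x x') => [->|xx']; first by left.
case: (eqVneq l l') => [->|ll']; first by right.
exfalso; apply: (@no_short_cycle 4) => //; exists [:: inl x; inr l; inl x'; inr l'].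
by rewrite /= !inE -!sum_eqE /= (negbTE xx') (negbTE ll') xl x'l xl' x'l'.
Qed.

Lemma levi_unique_proj x l y M y' M' : ~~ I x l -> I x M -> I y M -> I y l ->
  I x M' -> I y' M' -> I y' l -> y = y'.
Proof.
move=> xl xM yM yl xM' y'M' y'l; apply/eqP; apply/negPn/negP => yy'.
have [MM'|MM'] := eqVneq M M'.
  subst M'; case: (levi_unique_line yM y'M' yl y'l) => [yy''|Ml].
    by rewrite yy'' eqxx in yy'.
  by move: xM; rewrite Ml (negbTE xl).
have xy : x != y by apply: contraNneq xl => ->.
have xy' : x != y' by apply: contraNneq xl => ->.
have Ml : M != l by apply: contraNneq xl => <-.
have lM' : l != M' by apply: contraNneq xl => ->.
apply: (@no_short_cycle 6) => //; exists [:: inl x; inr M; inl y; inr l; inl y'; inr M'].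
rewrite /= !inE -!sum_eqE /= (negbTE xy) (negbTE xy') (negbTE yy') (negbTE Ml).
by rewrite (negbTE MM') (negbTE lM') xM yM yl y'l y'M' xM'.
Qed.

End Girth.

Lemma levi_exists_proj : (forall u v, dist_le (levi_rel I) u v 4) ->
  forall x l, ~~ I x l -> exists y M, [/\ I x M, I y M & I y l].
Proof.
move=> diam x l xl; have [j j4 [w [wj xw wl]]] := diam (inl x) (inr l).
subst j; move: j4 xw wl; case: w => [|v1 [|v2 [|v3 [|v4 [|v5 w]]]]] //= _.
- by move=> /andP [xv1 _] v1l; move: xv1; rewrite v1l /= (negbTE xl).
- by case: v1 => [y|M] //= /andP [_ /andP [Mv2 _]] v2l; move: Mv2; rewrite v2l.
- case: v1 => [y|M] //=; case: v2 => [y|N] /=; rewrite ?andbF ?andFb // andbT.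
  by move=> /and3P [xM yM yv3] v3l; exists y, M; move: yv3; rewrite v3l.
- case: v1 => [y|M] //=; case: v2 => [y|N] /=; rewrite ?andbF ?andFb //.
  case: v3 => [z|K] /=; rewrite ?andbF ?andFb // andbT.
  by move=> /and4P [_ _ _ Kv4] v4l; move: Kv4; rewrite v4l.
Qed.

End Levi.

Section GQ.
Variables (P L : finType) (I : P -> L -> bool) (s t : nat).
Hypothesis gqI : gq_axioms I s t.

Lemma gq_unique_line x x' l l' :
  I x l -> I x' l -> I x l' -> I x' l' -> x = x' \/ l = l'.
Proof. by case: gqI => _ _ + _ _; apply. Qed.

Lemma gq_exists_proj x l : ~~ I x l -> exists y M, [/\ I x M, I y M & I y l].
Proof. by case: gqI => _ _ _ + _; apply. Qed.

Lemma gq_unique_proj x l y M y' M' : ~~ I x l -> I x M -> I y M -> I y l ->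
  I x M' -> I y' M' -> I y' l -> y = y'.
Proof. by case: gqI => _ _ _ _; apply. Qed.

Lemma gq_unique_proj_line x l y M y' M' : ~~ I x l -> I x M -> I y M -> I y l ->
  I x M' -> I y' M' -> I y' l -> M = M'.
Proof.
move=> xl xM yM yl xM' y'M' y'l.
have yy' := gq_unique_proj xl xM yM yl xM' y'M' y'l; subst y'.
by case: (gq_unique_line xM yM xM' y'M') => // xy; move: xl; rewrite xy yl.
Qed.

Lemma gq_dual : gq_axioms (dual I) t s.
Proof.
case: gqI => card_l card_x _ _ _; split=> [x|l|l l' x x' lx l'x lx' l'x'|l x xl|].
- by rewrite -(card_x x).
- by rewrite -(card_l l).
- by case: (gq_unique_line lx lx' l'x l'x'); [right|left].
- by have [y [M [xM yM yl]]] := gq_exists_proj xl; exists M, y.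
- by move=> l x M y M' y' *; apply: (@gq_unique_proj_line x l y M y' M').
Qed.

Lemma card_line_setD1 p M : I p M -> #|[set x | I x M] :\ p| = s.
Proof.
case: gqI => card_l _ _ _ _ pM; apply/succn_inj.
by rewrite -(card_l M) (cardsD1 p [set x | I x M]) inE pM.
Qed.

Lemma collinear_unique_proj x l y y' :
  ~~ I x l -> I y l -> collinear I x y -> I y' l -> collinear I x y' -> y = y'.
Proof.
move=> xl yl /existsP [M /andP [xM yM]] y'l /existsP [M' /andP [xM' y'M']].
exact: (gq_unique_proj xl xM yM yl xM' y'M' y'l).
Qed.

Lemma not_collinear_pencil y N N' u v : I y N -> I y N' -> N != N' ->
  I u N -> I v N' -> u != y -> v != y -> ~~ collinear I u v.
Proof.
move=> yN yN' NN' uN vN' uy vy; apply: contraNN vy => uv.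
have uN' : ~~ I u N'.
  apply: contraNN uy => uN'.
  by case: (gq_unique_line uN yN uN' yN') => [->//|eqN]; rewrite eqN eqxx in NN'.
by rewrite -(collinear_unique_proj uN' yN' (collinearP uN yN) vN' uv).
Qed.

Lemma not_collinear_off q M u K z :
  I q M -> I u M -> I u K -> ~~ I q K -> I z K -> z != u -> ~~ collinear I z q.
Proof.
move=> qM uM uK qK zK zu; apply: contraNN zu; rewrite collinear_sym => qz.
by rewrite (collinear_unique_proj qK uK (collinearP qM uM) zK qz).
Qed.

Lemma not_collinear_corner p A a a' l1 l2 l3 x2 x3 :
  I p A -> I a A -> I a' A -> a != a' -> ~~ I p l1 -> I a l1 ->
  I a' l3 -> I x3 l3 -> ~~ collinear I x3 p ->
  I x2 l1 -> I x2 l2 -> I x3 l2 -> ~~ collinear I x2 p.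
Proof.
move=> pA aA a'A aa' pl1 al1 a'l3 x3l3 x3p x2l1 x2l2 x3l2.
have x3A : ~~ I x3 A by apply: contraNN x3p => x3A; apply: collinearP x3A pA.
have x2a : x2 != a.
  apply: contraNneq aa' => x2a; subst x2; apply/eqP.
  exact: (collinear_unique_proj x3A aA (collinearP x3l2 x2l2) a'A (collinearP x3l3 a'l3)).
exact: (not_collinear_off pA aA al1 pl1 x2l1 x2a).
Qed.

Lemma shadow_opposite p M (Y : {set P}) x : I p M -> Y \subset [set y | I y M] :\ p ->
  x \in shadow I M Y -> ~~ collinear I x p.
Proof.
move=> pM /subsetP YM; rewrite inE => /andP [xM /exists_inP [y /YM]].
rewrite !inE => /andP [yp yM] xy.
by apply: contraNN yp => xp; rewrite (collinear_unique_proj xM yM xy pM xp).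
Qed.

Lemma opposite_in_shadow p M x : I p M -> ~~ collinear I x p ->
  exists2 f, f \in [set y | I y M] :\ p & x \in shadow I M [set f].
Proof.
move=> pM xp.
have xM : ~~ I x M by apply: contraNN xp => xM; apply: collinearP xM pM.
have [f [N [xN fN fM]]] := gq_exists_proj xM.
exists f; first by rewrite !inE fM andbT; apply: contraNneq xp => <-; apply: collinearP xN fN.
by rewrite in_shadow1 xM (collinearP xN fN).
Qed.

Lemma card_shadow M (Y : {set P}) :
  Y \subset [set y | I y M] -> #|shadow I M Y| = #|Y| * (t * s).
Proof.
move=> /subsetP YM; case: gqI => card_l card_x _ _ _.
have {}YM y : y \in Y -> I y M by move/YM; rewrite inE.
apply: (@card_uniform_fibres _ _ _ _ (collinear I)).
- by move=> x; rewrite inE => /andP [_ /exists_inP [y]]; exists y.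
- move=> x y y'; rewrite inE => /andP [xM _] /YM yM /YM y'M xy xy'.
  exact: (collinear_unique_proj xM yM xy y'M xy').
move=> y yY; have yM := YM y yY.
have cardN : #|[set N | I y N] :\ M| = t.
  by apply/succn_inj; rewrite -(card_x y) (cardsD1 M [set N | I y N]) inE yM.
rewrite -cardN; apply: (@card_uniform_fibres _ _ _ _ I).
- move=> x; rewrite !inE => /andP [/andP [xM _] /existsP [N /andP [xN yN]]].
  by exists N; rewrite // !inE yN andbT; apply: contraNneq xM => <-.
- move=> x N N'; rewrite !inE => /andP [/andP [xM _] _] /andP [_ yN] /andP [_ yN'] xN xN'.
  case: (gq_unique_line xN yN xN' yN') => // xy.
  by rewrite xy yM in xM.
move=> N; rewrite !inE => /andP [NM yN].
have cardN' : #|[set x | I x N] :\ y| = s.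
  by apply/succn_inj; rewrite -(card_l N) (cardsD1 y [set x | I x N]) inE yN.
rewrite -cardN'; apply: eq_card => x; rewrite !inE.
apply/andP/andP => [[/andP [/andP [xM _] _] xN]|[xy xN]].
  by split=> //; apply: contraNneq xM => ->.
have xM : ~~ I x M.
  apply: contraNN NM => xM.
  by case: (gq_unique_line xN yN xM yM) => [xy'|->//]; rewrite xy' eqxx in xy.
rewrite xM (collinearP xN yN) /= andbT; split=> //.
by apply/exists_inP; exists y; last exact: collinearP xN yN.
Qed.

Lemma card_shadow_through p (Z : {set L}) x :
  Z \subset [set K | I p K] -> ~~ collinear I x p ->
  #|[set l in shadow (dual I) p Z | I x l]| = #|Z|.
Proof.
move=> /subsetP Zp xp; rewrite -[#|Z|]muln1.
have {}Zp K : K \in Z -> I p K by move/Zp; rewrite inE.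
apply: (@card_uniform_fibres _ _ _ _ (collinear (dual I))).
- by move=> l; rewrite !inE => /andP [/andP [_ /exists_inP [K KZ lK]] _]; exists K.
- move=> l K K'; rewrite !inE => /andP [/andP [pl _] _] /Zp pK /Zp pK'.
  move=> /existsP [z /andP [zl zK]] /existsP [z' /andP [z'l z'K]].
  exact: (gq_unique_proj_line pl pK zK zl pK' z'K z'l).
move=> K KZ; have pK := Zp K KZ.
have xK : ~~ I x K by apply: contraNN xp => xK; apply: collinearP xK pK.
have [z [l [xl zl zK]]] := gq_exists_proj xK.
rewrite -(cards1 l); apply: eq_card => l'; rewrite !inE.
apply/idP/eqP => [/andP [/andP [_ xl'] /existsP [z' /andP [z'l' z'K]]]|->].
  exact: (gq_unique_proj_line xK xl' z'l' z'K xl zl zK).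
have pl : ~~ dual I l p by apply: contraNN xp => pl; apply: collinearP xl pl.
have lK : collinear (dual I) l K := collinearP (I := dual I) zl zK.
by rewrite xl lK pl !andbT; apply/exists_inP; exists K.
Qed.

End GQ.

Definition shadow_vertices (P L : finType) (I : P -> L -> bool) p M
    (Y : {set P}) (Z : {set L}) : {set P + L} :=
  sum_set (shadow I M Y) (shadow (dual I) p Z).

Section ShadowGraph.
Variables (P L : finType) (I : P -> L -> bool) (s t : nat).
Hypothesis gqI : gq_axioms I s t.
Let gqD := gq_dual gqI.

Lemma exists_opposite_flag p M0 y A a N :
  I p M0 -> I y M0 -> y != p -> I p A -> A != M0 -> I a A -> a != p ->
  I y N -> N != M0 ->
  exists x l, [/\ I x N, I a l, I x l, ~~ collinear I x p & ~~ collinear (dual I) l M0].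
Proof.
move=> pM0 yM0 yp pA AM0 aA ap yN NM0.
have ya : ~~ collinear I y a.
  by apply: (not_collinear_pencil gqI pM0 pA) => //; rewrite eq_sym.
have aN : ~~ I a N by apply: contraNN ya => aN; apply: collinearP yN aN.
have [x [l [al xl xN]]] := gq_exists_proj gqI aN.
have pN : ~~ I p N.
  apply: contraNN yp => pN.
  by case: (gq_unique_line gqI yM0 pM0 yN pN) => [->//|M0N]; rewrite M0N eqxx in NM0.
have xy : x != y by apply: contraNneq ya => xy; subst x; apply: collinearP xl al.
have xp : ~~ collinear I x p := not_collinear_off gqI pM0 yM0 yN pN xN xy.
have aM0 : ~~ I a M0 by apply: contraNN ya => aM0; apply: collinearP yM0 aM0.
have lA : l != A by apply: contraNneq xp => lA; subst l; apply: collinearP xl pA.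
by exists x, l; split=> //; apply: (not_collinear_off gqD pM0 pA aA aM0 al lA).
Qed.

Section Octagon.
Variables (p : P) (M0 : L) (y : P) (A : L) (a a' : P) (N N' : L).
Hypotheses (pM0 : I p M0) (yM0 : I y M0) (yp : y != p).
Hypotheses (pA : I p A) (AM0 : A != M0) (aA : I a A) (a'A : I a' A) (aa' : a != a').
Hypotheses (yN : I y N) (yN' : I y N') (NN' : N != N').
Variables (x1 x3 : P) (l1 l3 : L).
Hypotheses (x1N : I x1 N) (al1 : I a l1) (x1l1 : I x1 l1).
Hypotheses (x1p : ~~ collinear I x1 p) (l1M0 : ~~ collinear (dual I) l1 M0).
Hypotheses (x3N' : I x3 N') (a'l3 : I a' l3) (x3l3 : I x3 l3).
Hypotheses (x3p : ~~ collinear I x3 p) (l3M0 : ~~ collinear (dual I) l3 M0).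

Lemma flags_not_collinear : ~~ collinear I x1 x3 /\ ~~ collinear (dual I) l1 l3.
Proof.
have yp' : collinear I y p := collinearP yM0 pM0.
have AM0' : collinear (dual I) A M0 := collinearP (I := dual I) pA pM0.
split.
  apply: (not_collinear_pencil gqI yN yN' NN' x1N x3N').
    by apply: contraNneq x1p => ->.
  by apply: contraNneq x3p => ->.
apply: (not_collinear_pencil gqD aA a'A aa' al1 a'l3).
  by apply: contraNneq l1M0 => ->.
by apply: contraNneq l3M0 => ->.
Qed.

Section Completion.
Variables (x2 x4 : P) (l2 l4 : L).
Hypotheses (x3l2 : I x3 l2) (x2l2 : I x2 l2) (x2l1 : I x2 l1).
Hypotheses (x1l4 : I x1 l4) (x4l4 : I x4 l4) (x4l3 : I x4 l3).

Lemma octagon_opposite :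
  [/\ ~~ collinear I x2 p, ~~ collinear I x4 p,
      ~~ collinear (dual I) l2 M0 & ~~ collinear (dual I) l4 M0].
Proof.
have pl1 : ~~ I p l1.
  by apply: contraNN l1M0 => pl1; apply: (collinearP (I := dual I)) pl1 pM0.
have pl3 : ~~ I p l3.
  by apply: contraNN l3M0 => pl3; apply: (collinearP (I := dual I)) pl3 pM0.
have x1M0 : ~~ I x1 M0 by apply: contraNN x1p => x1M0; apply: collinearP x1M0 pM0.
have x3M0 : ~~ I x3 M0 by apply: contraNN x3p => x3M0; apply: collinearP x3M0 pM0.
have a'a : a' != a by rewrite eq_sym.
have N'N : N' != N by rewrite eq_sym.
split.
- exact: (not_collinear_corner gqI pA aA a'A aa' pl1 al1 a'l3 x3l3 x3p x2l1 x2l2 x3l2).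
- exact: (not_collinear_corner gqI pA a'A aA a'a pl3 a'l3 al1 x1l1 x1p x4l3 x4l4 x1l4).
- exact: (not_collinear_corner gqD yM0 yN' yN N'N x3M0 x3N' x1N x1l1 l1M0 x3l2 x2l2 x2l1).
- exact: (not_collinear_corner gqD yM0 yN yN' NN' x1M0 x1N x3N' x3l3 l3M0 x1l4 x4l4 x4l3).
Qed.

(* [x1] and [x3] both project onto [y] and [l1], [l3] onto [A], hence three
   projections on each side. *)
Lemma octagon_in_shadow :
  exists (Y : {set P}) (Z : {set L}),
  [/\ Y \subset [set y | I y M0] :\ p, Z \subset [set K | I p K] :\ M0,
      #|Y| <= 3, #|Z| <= 3 &
      all (mem (shadow_vertices I p M0 Y Z)) (octagon x1 x2 x3 x4 l1 l2 l3 l4)].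
Proof.
have [x2p x4p l2M0 l4M0] := octagon_opposite.
have [f2 f2M0 x2S] := opposite_in_shadow gqI pM0 x2p.
have [f4 f4M0 x4S] := opposite_in_shadow gqI pM0 x4p.
have [B2 B2p l2S] := opposite_in_shadow gqD pM0 l2M0.
have [B4 B4p l4S] := opposite_in_shadow gqD pM0 l4M0.
have x1S : x1 \in shadow I M0 [set y].
  rewrite in_shadow1 (collinearP x1N yN) andbT.
  by apply: contraNN x1p => x1M0; apply: collinearP x1M0 pM0.
have x3S : x3 \in shadow I M0 [set y].
  rewrite in_shadow1 (collinearP x3N' yN') andbT.
  by apply: contraNN x3p => x3M0; apply: collinearP x3M0 pM0.
have l1S : l1 \in shadow (dual I) p [set A].
  rewrite in_shadow1 (collinearP (I := dual I) al1 aA) andbT.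
  by apply: contraNN l1M0 => pl1; apply: (collinearP (I := dual I)) pl1 pM0.
have l3S : l3 \in shadow (dual I) p [set A].
  rewrite in_shadow1 (collinearP (I := dual I) a'l3 a'A) andbT.
  by apply: contraNN l3M0 => pl3; apply: (collinearP (I := dual I)) pl3 pM0.
pose Y := [set u in [:: y; f2; f4]]; pose Z := [set K in [:: A; B2; B4]].
have shY f x : f \in Y -> x \in shadow I M0 [set f] -> x \in shadow I M0 Y.
  by move=> fY; apply/subsetP/shadowS; rewrite sub1set.
have shZ B l : B \in Z -> l \in shadow (dual I) p [set B] -> l \in shadow (dual I) p Z.
  by move=> BZ; apply/subsetP/shadowS; rewrite sub1set.
have [yY f2Y f4Y] : [/\ y \in Y, f2 \in Y & f4 \in Y] by rewrite !inE !eqxx !orbT.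
have [AZ B2Z B4Z] : [/\ A \in Z, B2 \in Z & B4 \in Z] by rewrite !inE !eqxx !orbT.
exists Y, Z; split; try by rewrite cardsE card_size.
- have yM0p : y \in [set y | I y M0] :\ p by rewrite !inE yp.
  by apply/subsetP => u; rewrite inE !in_cons in_nil orbF => /or3P [] /eqP ->.
- have ApM0 : A \in [set K | I p K] :\ M0 by rewrite !inE AM0.
  by apply/subsetP => K; rewrite inE !in_cons in_nil orbF => /or3P [] /eqP ->.
rewrite /= /shadow_vertices !inl_sum_set !inr_sum_set.
rewrite (shY _ _ yY x1S) (shY _ _ f2Y x2S) (shY _ _ yY x3S) (shY _ _ f4Y x4S).
by rewrite (shZ _ _ AZ l1S) (shZ _ _ B2Z l2S) (shZ _ _ AZ l3S) (shZ _ _ B4Z l4S).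
Qed.

End Completion.

Lemma octagon_of_flags :
  exists (Y : {set P}) (Z : {set L}) (c : seq (P + L)),
  [/\ Y \subset [set y | I y M0] :\ p, Z \subset [set K | I p K] :\ M0,
      #|Y| <= 3, #|Z| <= 3 &
      [/\ size c = 8, uniq c, cycle (levi_rel I) c &
          all (mem (shadow_vertices I p M0 Y Z)) c]].
Proof.
have [x13 l13] := flags_not_collinear.
have x3l1 : ~~ I x3 l1 by apply: contraNN x13 => x3l1; apply: collinearP x1l1 x3l1.
have x1l3 : ~~ I x1 l3 by apply: contraNN x13 => x1l3; apply: collinearP x1l3 x3l3.
have [x2 [l2 [x3l2 x2l2 x2l1]]] := gq_exists_proj gqI x3l1.
have [x4 [l4 [x1l4 x4l4 x4l3]]] := gq_exists_proj gqI x1l3.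
have [Y [Z [YM0 Zp cY cZ inS]]] := octagon_in_shadow x3l2 x2l2 x2l1 x1l4 x4l4 x4l3.
have /andP [uc cc] := octagon_cycle x13 l13 x1l1 x2l1 x2l2 x3l2 x3l3 x4l3 x4l4 x1l4.
by exists Y, Z, (octagon x1 x2 x3 x4 l1 l2 l3 l4).
Qed.

End Octagon.

Lemma exists_octagon_in_shadow p M0 : 1 < s -> 1 < t -> I p M0 ->
  exists (Y : {set P}) (Z : {set L}) (c : seq (P + L)),
  [/\ Y \subset [set y | I y M0] :\ p, Z \subset [set K | I p K] :\ M0,
      #|Y| <= 3, #|Z| <= 3 &
      [/\ size c = 8, uniq c, cycle (levi_rel I) c &
          all (mem (shadow_vertices I p M0 Y Z)) c]].
Proof.
move=> s1 t1 pM0; case: (gqI) => card_l card_x _ _ _.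
have [|y] := @exists_fresh _ [set y | I y M0] [:: p]; first by rewrite card_l /=; lia.
rewrite inE mem_seq1 => yM0 yp.
have [|A] := @exists_fresh _ [set K | I p K] [:: M0]; first by rewrite card_x /=; lia.
rewrite inE mem_seq1 => pA AM0.
have [|a] := @exists_fresh _ [set x | I x A] [:: p]; first by rewrite card_l /=; lia.
rewrite inE mem_seq1 => aA ap.
have [|a'] := @exists_fresh _ [set x | I x A] [:: a; p]; first by rewrite card_l /=; lia.
rewrite !inE negb_or eq_sym => a'A /andP [aa' a'p].
have [|N] := @exists_fresh _ [set K | I y K] [:: M0]; first by rewrite card_x /=; lia.
rewrite inE mem_seq1 => yN NM0.
have [|N'] := @exists_fresh _ [set K | I y K] [:: N; M0]; first by rewrite card_x /=; lia.
rewrite !inE negb_or eq_sym => yN' /andP [NN' N'M0].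
have [x1 [l1 [x1N al1 x1l1 x1p l1M0]]] :=
  exists_opposite_flag pM0 yM0 yp pA AM0 aA ap yN NM0.
have [x3 [l3 [x3N' a'l3 x3l3 x3p l3M0]]] :=
  exists_opposite_flag pM0 yM0 yp pA AM0 a'A a'p yN' N'M0.
exact: (octagon_of_flags pM0 yM0 yp pA AM0 aA a'A aa' yN yN' NN'
  x1N al1 x1l1 x1p l1M0 x3N' a'l3 x3l3 x3p l3M0).
Qed.

Lemma card_shadow_vertices p M0 (Y : {set P}) (Z : {set L}) :
  Y \subset [set y | I y M0] -> Z \subset [set K | I p K] ->
  #|shadow_vertices I p M0 Y Z| = (#|Y| + #|Z|) * s * t.
Proof.
move=> YM0 Zp; rewrite card_sum_set (card_shadow gqI YM0) (card_shadow gqD Zp).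
by rewrite [t * s]mulnC !mulnDl !mulnA.
Qed.

Lemma shadow_graph_biregular p M0 (Y : {set P}) (Z : {set L}) (c : seq (P + L)) :
  let S := shadow_vertices I p M0 Y Z in
  (forall k, k < 8 -> ~ has_cycle_len (levi_rel I) k) -> I p M0 ->
  Y \subset [set y | I y M0] :\ p -> Z \subset [set K | I p K] :\ M0 ->
  2 <= #|Y| -> 2 <= #|Z| ->
  [/\ size c = 8, uniq c, cycle (levi_rel I) c & all (mem S) c] ->
  bipartite_biregular (induced (levi_rel I) S) (fun v => is_line (val v)) #|Y| #|Z| 8.
Proof.
move=> S no_short_cycle pM0 YM0p ZpM0 Y2 Z2 [c8 uc cc cS].
have YM0 := subset_trans YM0p (subD1set _ _); have Zp := subset_trans ZpM0 (subD1set _ _).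
split.
- by rewrite Y2 Z2.
- exact/induced_simple/levi_simple.
- by move=> u v; apply: levi_bipartite.
- case=> [[x|l] vS]; split=> // _; rewrite degree_induced.
  + have := vS; rewrite /S /shadow_vertices inl_sum_set => xS.
    rewrite card_levi_nbr_inl.
    exact: (card_shadow_through gqI Zp (shadow_opposite gqI pM0 YM0p xS)).
  + have := vS; rewrite /S /shadow_vertices inr_sum_set => lS.
    rewrite card_levi_nbr_inr.
    exact: (card_shadow_through gqD YM0 (shadow_opposite gqD pM0 ZpM0 lS)).
- by apply: (girth_eq_induced (c := c) no_short_cycle); split.
Qed.

Lemma exists_biregular_shadow_graph m1 n1 :
  (forall k, k < 8 -> ~ has_cycle_len (levi_rel I) k) ->
  3 <= m1 <= s -> 3 <= n1 <= t -> (exists p M0, I p M0) ->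
  exists S : {set P + L},
    bipartite_biregular (induced (levi_rel I) S) (fun v => is_line (val v)) m1 n1 8 /\
    #|S| = (m1 + n1) * s * t.
Proof.
move=> no_short_cycle /andP [m13 m1s] /andP [n13 n1t] [p [M0 pM0]].
have s1 : 1 < s by lia.
have t1 : 1 < t by lia.
have [Y0 [Z0 [c [Y0M0 Z0p cY0 cZ0 [c8 uc cc cS0]]]]] := exists_octagon_in_shadow s1 t1 pM0.
have [|Y [Y0Y YM0 cY]] := exists_set_between (k := m1) Y0M0.
  by rewrite (card_line_setD1 gqI pM0); lia.
have [|Z [Z0Z ZpM0 cZ]] := exists_set_between (k := n1) Z0p.
  by have := card_line_setD1 gqD pM0; rewrite /dual => ->; lia.
have cS : all (mem (shadow_vertices I p M0 Y Z)) c.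
  apply/allP => v /(allP cS0); apply/subsetP.
  exact: sum_setS (shadowS I M0 Y0Y) (shadowS (dual I) p Z0Z).
exists (shadow_vertices I p M0 Y Z); rewrite -cY -cZ; split.
  apply: (shadow_graph_biregular (c := c) no_short_cycle pM0 YM0 ZpM0) => //.
  - by rewrite cY; lia.
  - by rewrite cZ; lia.
rewrite card_shadow_vertices //.
  exact: subset_trans YM0 (subD1set _ _).
exact: subset_trans ZpM0 (subD1set _ _).
Qed.

End ShadowGraph.

Section GQOrder.
Variables (P L : finType) (I : P -> L -> bool) (s t : nat).
Hypothesis gqo : is_GQ_order I s t.

Lemma gq_order_girth : forall k, k < 8 -> ~ has_cycle_len (levi_rel I) k.
Proof. by case: gqo => -[_ _ []]. Qed.

Lemma gq_axioms_of_order : gq_axioms I s t.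
Proof.
case: gqo => -[_ [diam _] _] card_l card_x; split=> //.
- exact: levi_unique_line gq_order_girth.
- exact: levi_exists_proj diam.
- exact: levi_unique_proj gq_order_girth.
Qed.

Lemma gq_order_exists_flag : exists p M, I p M.
Proof.
case: gqo => -[_ [_ [[p|M] _]] _] card_l card_x.
- have /card_gt0P [M] : 0 < #|[set M | I p M]| by rewrite card_x.
  by rewrite inE => pM; exists p, M.
- have /card_gt0P [p] : 0 < #|[set p | I p M]| by rewrite card_l.
  by rewrite inE => pM; exists p, M.
Qed.

End GQOrder.

Unset Implicit Arguments.

Theorem mainTheorem5 (m n : nat) :
  4 <= m <= n ->
  (exists (P L : finType) (I : P -> L -> bool), is_GQ_order I m n) ->
  forall m1 n1 : nat, 3 <= m1 <= m -> m1 <= n1 -> n1 <= n ->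
  exists (T : finType) (e : rel T) (c : T -> bool),
    bipartite_biregular e c m1 n1 8 /\ #|T| = ((m1 + n1) * m * n)%N.
Proof.
move=> _ [P [L [I gqo]]] m1 n1 /andP [m13 m1m] m1n1 n1n.
have [||S [S_biregular cardS]] := exists_biregular_shadow_graph (m1 := m1) (n1 := n1)
  (gq_axioms_of_order gqo) (gq_order_girth gqo) _ _ (gq_order_exists_flag gqo).
- by rewrite m13 m1m.
- by apply/andP; split; lia.
exists _, (induced (levi_rel I) S), (fun v => is_line (val v)).
by split; last rewrite card_induced cardS.
Qed.
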